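(* Let $N\ge 1$ and let $0=p_1<p_2<\cdots<p_N$ be integers (the sensor positions, in units of $d$). Define $$\Phi^u=\{p_{l_1}+p_{l_2}+p_{l_3}\}\cup\{p_{l_1}+p_{l_2}-p_{l_3}\}\cup\{-p_{l_1}-p_{l_2}+p_{l_3}\}\cup\{-p_{l_1}-p_{l_2}-p_{l_3}\},$$ where in each set the indices $l_1,l_2,l_3$ range independently over $\{1,2,\dots,N\}$, and $\Phi^u$ is an ordinary set (repeated values counted once). Then $$6N-5\;\le\;|\Phi^u|\;\le\;k(N):=\frac{4N^3+3N^2-N+3}{3}.$$
   Context: $\Phi^u$ is the set of virtual sensor positions of the third-order exhaustive co-array (TO-ECA) of the linear array with physical sensors at $p_1,\dots,p_N$; it is the union of the underlying sets of the four third-order co-arrays obtained from the cumulants $\mathrm{cum}\{x,x,x\}$, $\mathrm{cum}\{x,x,x^*\}$, $\mathrm{cum}\{x^*,x^*,x\}$, $\mathrm{cum}\{x^*,x^*,x^*\}$ of the received signal vector. *)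

From mathcomp Require Import all_boot all_order all_algebra.
Set Implicit Arguments. Unset Strict Implicit. Unset Printing Implicit Defensive.
Import Order.TTheory GRing.Theory Num.Theory.
Local Open Scope ring_scope.

(* All values f (p l1) (p l2) (p l3), l1 l2 l3 ranging independently over 'I_N
   (0-based indices; sensor l is p l). *)
Definition triple_vals (N : nat) (p : 'I_N -> int) (f : int -> int -> int -> int)
  : seq int :=
  flatten [seq flatten [seq [seq f (p l1) (p l2) (p l3) | l3 <- enum 'I_N]
                           | l2 <- enum 'I_N] | l1 <- enum 'I_N].

Definition Phi_u (N : nat) (p : 'I_N -> int) : seq int :=
  undup (triple_vals p (fun a b c => a + b + c)
      ++ triple_vals p (fun a b c => a + b - c)
      ++ triple_vals p (fun a b c => - a - b + c)
      ++ triple_vals p (fun a b c => - a - b - c)).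

From mathcomp Require Import all_boot all_order all_algebra zify lra.
Set Implicit Arguments. Unset Strict Implicit. Unset Printing Implicit Defensive.
Import Order.TTheory GRing.Theory Num.Theory.
Local Open Scope ring_scope.

(* Phi^u is S together with -S, where S collects the a + b + c and the a + b - c
   for positions a, b, c.  The sums a + b + c are indexed by 3-multisets of
   positions, C(N+2, 3) of them.  A difference a + b - c with c in {a, b} is a
   position, hence the sum of three positions since 0 is one; otherwise it is
   determined by c and a 2-multiset avoiding c, N C(N, 2) choices.  Hence
   |Phi^u| <= 2 (C(N+2, 3) + N C(N, 2)) = (4N^3 + 2N)/3 <= k(N).
   Conversely, with M = p_N the largest position, the 3(N-1) numbers q, M + q
   and 2M + q, for q a nonzero position, are pairwise distinct positive sums of
   three positions; together with their opposites and 0 they give 6N - 5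
   elements of Phi^u. *)

Section MultisetSums.
Variable V : nmodType.
Implicit Types s t : seq V.

(* [msums k s] lists the sums of the k-element multisets of entries of s. *)
Fixpoint msums (k : nat) (s : seq V) {struct k} : seq V :=
  if k is k'.+1 then
    (fix msums_k s :=
       if s is x :: s' then [seq x + y | y <- msums k' s] ++ msums_k s' else [::]) s
  else [:: 0].

Lemma msumsS_cons k x s :
  msums k.+1 (x :: s) = [seq x + y | y <- msums k (x :: s)] ++ msums k.+1 s.
Proof. by []. Qed.

Lemma size_msums k s : size (msums k s) = 'C((size s + k).-1, k).
Proof.
elim: s k => [|x s IHs] k; first by case: k => [|k] //; rewrite bin_small.
elim: k => [|k IHk]; first by rewrite bin0.
by rewrite msumsS_cons size_cat size_map IHk IHs !addnS /= binS addnC.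
Qed.

Lemma sum_mem_msums k s t :
  size t = k -> all (mem s) t -> \sum_(y <- t) y \in msums k s.
Proof.
elim: s k t => [|x s IHs] k t.
  by case: t => [|y t] <- //=; rewrite big_nil mem_seq1.
elim: k t => [|k IHk] t; first by move/size0nil->; rewrite big_nil mem_seq1.
move=> size_t t_sub; rewrite msumsS_cons mem_cat.
have [xt|xNt] := boolP (x \in t).
  rewrite (perm_big _ (perm_to_rem xt)) big_cons map_f ?IHk //.
    by move: size_t; rewrite size_rem // => ->.
  by apply/allP=> y /mem_rem; apply: (allP t_sub).
apply/orP; right; apply: IHs => //; apply/allP=> y yt.
by move: (allP t_sub y yt); rewrite inE => /predU1P[yx|//]; rewrite -yx yt in xNt.
Qed.

Lemma addr_mem_msums2 s a b :
  a \in s -> b \in s -> a + b \in msums 2 s.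
Proof.
move=> sa sb; have := @sum_mem_msums 2 s [:: a; b].
by rewrite !big_cons big_nil addr0 /= sa sb; apply.
Qed.

Lemma addr_mem_msums3 s a b c :
  a \in s -> b \in s -> c \in s -> a + b + c \in msums 3 s.
Proof.
move=> sa sb sc; have := @sum_mem_msums 3 s [:: a; b; c].
by rewrite !big_cons big_nil addr0 addrA /= sa sb sc; apply.
Qed.
End MultisetSums.

Section SumsOfThree.
Variable V : zmodType.
Implicit Types s : seq V.

Definition msums2_sub s := [seq y - c | c <- s, y <- msums 2 (rem c s)].

Lemma size_msums2_sub s : size (msums2_sub s) = (size s * 'C(size s, 2))%N.
Proof.
rewrite size_allpairs_dep.
have -> : [seq size (msums 2 (rem c s)) | c <- s] = [seq 'C(size s, 2) | _ <- s].
  apply/eq_in_map => c sc.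
  by rewrite size_msums size_rem //; case: s sc => // x t _; rewrite addn2.
by rewrite sumnE big_map big_const_seq count_predT iter_addn_0 mulnC.
Qed.

Definition sums3_cover s := msums 3 s ++ msums2_sub s.

Lemma size_sums3_cover s :
  size (sums3_cover s) = ('C((size s).+2, 3) + size s * 'C(size s, 2))%N.
Proof. by rewrite size_cat size_msums size_msums2_sub addn3. Qed.

Lemma addr3_mem_cover s a b c : a \in s -> b \in s -> c \in s ->
  a + b + c \in sums3_cover s.
Proof. by move=> sa sb sc; rewrite mem_cat addr_mem_msums3. Qed.

Lemma addrB_mem_cover s a b c : 0 \in s -> a \in s -> b \in s -> c \in s ->
  a + b - c \in sums3_cover s.
Proof.
move=> s0 sa sb sc.
have [<-|ca] := eqVneq c a.
  by rewrite addrC addKr -[b]addr0 -[b + 0]addr0 addr3_mem_cover.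
have [<-|cb] := eqVneq c b.
  by rewrite addrK -[a]addr0 -[a + 0]addr0 addr3_mem_cover.
rewrite mem_cat (allpairs_f_dep (fun c y => y - c)) ?orbT //.
by rewrite addr_mem_msums2 // rem_mem // eq_sym.
Qed.
End SumsOfThree.

Section ShiftedCopies.
Variable R : realDomainType.

Lemma mulrn_addr_inj (M q q' : R) (k k' : nat) : 0 < q <= M -> 0 < q' <= M ->
  M *+ k + q = M *+ k' + q' -> k = k' /\ q = q'.
Proof.
wlog le_kk' : k k' q q' / (k <= k')%N => [wlog_le hq hq' E|].
  have [le|/ltnW le] := leqP k k'; first exact: wlog_le.
  by have [-> ->] := wlog_le _ _ _ _ le hq' hq (esym E).
move=> /andP[q_gt0 q_leM] /andP[q'_gt0 q'_leM].
have [lt_kk'|lt_k'k|->] := ltngtP k k'; last by move/addrI.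
- have : M *+ k.+1 <= M *+ k' by apply: ler_wpMn2l lt_kk'; lra.
  rewrite mulrS; lra.
- by rewrite ltnNge le_kk' in lt_k'k.
Qed.

Lemma uniq_sym_pos (t : seq R) :
  uniq t -> {in t, forall x, 0 < x} -> uniq (0 :: t ++ map -%R t).
Proof.
move=> t_uniq t_gt0.
have t0 : 0 \notin t by apply/negP => /t_gt0; rewrite ltxx.
have Nt0 : 0 \notin map -%R t by rewrite -[0]oppr0 (mem_map oppr_inj).
have tNt : ~~ has (mem t) (map -%R t).
  by apply/hasPn => _ /mapP[x /t_gt0 x_gt0 ->]; apply/negP => /t_gt0; lra.
by rewrite /= mem_cat negb_or t0 Nt0 cat_uniq t_uniq tNt (map_inj_uniq oppr_inj).
Qed.

Variables (s : seq R) (M : R).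
Hypothesis s_uniq : uniq s.
Hypothesis s_bounds : {in s, forall x, 0 <= x <= M}.

Definition three_shifts := [seq M *+ k + q | k <- iota 0 3, q <- rem 0 s].

Lemma rem0_bounds q : q \in rem 0 s -> 0 < q <= M.
Proof.
rewrite mem_rem_uniq // inE => /andP[q_neq0 /s_bounds/andP[q_ge0 q_leM]].
by rewrite lt_def q_neq0 q_ge0 q_leM.
Qed.

Lemma three_shifts_gt0 : {in three_shifts, forall x, 0 < x}.
Proof.
move=> _ /allpairsP[[k q] [_ /= /rem0_bounds/andP[q_gt0 q_leM] ->]].
by rewrite ltr_wpDl // mulrn_wge0 // (ltW (lt_le_trans q_gt0 q_leM)).
Qed.

Lemma uniq_three_shifts : uniq three_shifts.
Proof.
apply: allpairs_uniq; [exact: iota_uniq | exact: rem_uniq |].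
move=> x y /allpairsP[[k q] [_ sq ->]] /allpairsP[[k' q'] [_ sq' ->]] /= E.
by case: (mulrn_addr_inj (rem0_bounds sq) (rem0_bounds sq') E) => /= -> ->.
Qed.

Lemma size_three_shifts : 0 \in s -> size three_shifts = (3 * (size s).-1)%N.
Proof. by move=> s0; rewrite size_allpairs size_iota size_rem. Qed.

Lemma three_shifts_sum3 x : 0 \in s -> M \in s -> x \in three_shifts ->
  exists a b c, [/\ a \in s, b \in s, c \in s & x = a + b + c].
Proof.
move=> s0 sM /allpairsP[[k q] [/= k3 /mem_rem sq ->]].
move: k3; rewrite !inE => /or3P[] /eqP->.
- by exists 0, 0, q; rewrite !addr0 add0r.
- by exists M, 0, q; rewrite addr0.
- by exists M, M, q.
Qed.
End ShiftedCopies.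

Lemma bin_cover_closed_form n :
  (3 * ('C(n.+2, 3) + n * 'C(n, 2)).*2 = 4 * n ^ 3 + 2 * n)%N.
Proof.
have := bin_ffact n.+2 3; have := bin_ffact n 2.
case: n => [|n]; rewrite !ffactnS !ffactn0 !factS fact0 -!mul2n; nia.
Qed.

Lemma triple_valsP N (p : 'I_N -> int) f x :
  reflect (exists i j k, x = f (p i) (p j) (p k)) (x \in triple_vals p f).
Proof.
have enumP (l : 'I_N) : l \in enum 'I_N by rewrite mem_enum.
apply: (iffP flattenP) => [|[i [j [k ->]]]].
  by move=> [_ /mapP[i _ ->] /flattenP[_ /mapP[j _ ->] /mapP[k _ ->]]]; exists i, j, k.
eexists; first exact: map_f (enumP i).
by apply/flattenP; eexists; [exact: map_f (enumP j) | exact: map_f (enumP k)].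
Qed.

Lemma Phi_uP N (p : 'I_N -> int) x :
  reflect (exists a b c, [/\ a \in codom p, b \in codom p, c \in codom p &
             x \in [:: a + b + c; a + b - c; - a - b + c; - a - b - c]])
          (x \in Phi_u p).
Proof.
rewrite mem_undup !mem_cat; apply: (iffP idP).
  by case/or4P => /triple_valsP[i [j [k ->]]]; exists (p i), (p j), (p k);
     rewrite !codom_f !inE eqxx ?orbT.
move=> [_ [_ [_ [/codomP[i ->] /codomP[j ->] /codomP[k ->]]]]].
rewrite !inE => /or4P[] /eqP->; apply/or4P;
  [apply: Or41 | apply: Or42 | apply: Or43 | apply: Or44];
  by apply/triple_valsP; exists i, j, k.
Qed.

Lemma size_Phi_u_le N (p : 'I_N -> int) : 0 \in codom p ->
  (size (Phi_u p) <= ('C(N.+2, 3) + N * 'C(N, 2)).*2)%N.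
Proof.
move=> p0; set T := sums3_cover (codom p).
have -> : (('C(N.+2, 3) + N * 'C(N, 2)).*2 = size (T ++ map -%R T))%N.
  by rewrite size_cat size_map -addnn size_sums3_cover size_codom card_ord.
apply: uniq_leq_size (undup_uniq _) _ => x /Phi_uP[a [b [c [pa pb pc]]]].
have sum3T : a + b + c \in T by apply: addr3_mem_cover.
have subT : a + b - c \in T by apply: addrB_mem_cover.
rewrite !inE mem_cat => /or4P[] /eqP->; rewrite ?sum3T ?subT //; apply/orP; right.
- by rewrite (_ : - a - b + c = - (a + b - c)) ?map_f // !opprD opprK.
- by rewrite (_ : - a - b - c = - (a + b + c)) ?map_f // !opprD.
Qed.

Lemma size_Phi_u_ge N (p : 'I_N -> int) M : injective p ->
  0 \in codom p -> M \in codom p -> {in codom p, forall x, 0 <= x <= M} ->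
  (6 * N - 5 <= size (Phi_u p))%N.
Proof.
move=> p_inj p0 pM p_bounds.
have p_uniq : uniq (codom p) by rewrite map_inj_uniq ?enum_uniq.
set S := three_shifts (codom p) M; set W := 0 :: S ++ map -%R S.
have : (6 * N - 5 <= size W)%N.
  by rewrite /= size_cat size_map size_three_shifts // size_codom card_ord; lia.
move/leq_trans; apply; apply: uniq_leq_size.
  by apply: uniq_sym_pos; [apply: uniq_three_shifts | apply: three_shifts_gt0].
move=> x; rewrite inE mem_cat => /or3P[/eqP->| |/mapP[y + ->]].
- by apply/Phi_uP; exists 0, 0, 0; rewrite p0 !inE !addr0 eqxx.
- move=> /(three_shifts_sum3 p0 pM)[a [b [c [pa pb pc ->]]]].
  by apply/Phi_uP; exists a, b, c; rewrite !inE eqxx.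
- move=> /(three_shifts_sum3 p0 pM)[a [b [c [pa pb pc ->]]]].
  by apply/Phi_uP; exists a, b, c; rewrite !inE !opprD eqxx ?orbT.
Qed.

Theorem theorem1 (N : nat) (hN : (1 <= N)%N) (p : 'I_N -> int)
  (hp0 : forall i : 'I_N, nat_of_ord i = 0%N -> p i = 0)
  (hinc : forall i j : 'I_N, (i < j)%N -> p i < p j) :
  (6 * N - 5 <= size (Phi_u p))%N /\
  (size (Phi_u p) <= (4 * N ^ 3 + 3 * N ^ 2 - N + 3) %/ 3)%N.
Proof.
case: N hN p hp0 hinc => [//|n] _ p hp0 hinc.
have p_le (i j : 'I_n.+1) : (i <= j)%N -> p i <= p j.
  by rewrite leq_eqVlt => /predU1P[/val_inj -> // | /hinc/ltW].
have p_inj : injective p.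
  move=> i j pij; apply/val_inj.
  by case: (ltngtP i j) => // /hinc; rewrite pij ltxx.
have p0 : 0 \in codom p by rewrite -(hp0 ord0) ?codom_f.
split.
  apply: (size_Phi_u_ge p_inj p0 (codom_f p ord_max)) => _ /codomP[i ->].
  by rewrite -(hp0 ord0) // !p_le // -ltnS.
apply: leq_trans (size_Phi_u_le p0) _; rewrite leq_divRL //.
have := bin_cover_closed_form n.+1; lia.
Qed.
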